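(* Let $W\in\mathcal{P}(\mathcal{Y}|\mathcal{X})$ be a symmetric channel with $R_{\mathrm{cr}}<C(W)$ and no all-zero column, let $R_\infty<R<C(W)$, and let $q_R$, $\mathrm{e}_{\mathrm{SP}}(\cdot,R)$ be as in the context. (i) For every $\lambda\in\mathbb{R}$, $M_x(\lambda)=\sum_{y\in\mathrm{supp}(W(\cdot|x))}W(y|x)^{1-\lambda}q_R(y)^\lambda$ is finite and does not depend on $x\in\mathcal{X}$. (ii) Fix $x_{\mathrm o}\in\mathcal{X}$ and let $\mathbf{x}_{\mathrm o}^N$ be the $N$-tuple with all entries $x_{\mathrm o}$. For every $(N,R)$ code with ideal feedback (encoding maps $f_n$), every message $m$ and every $r\ge0$ for which $\mathrm{e}_{\mathrm{SP}}(r,R)$ is defined, $$P_{\mathbf{Y}^N|M}\{\mathcal{S}(m,r)\mid m\}=W\{\mathcal{S}(\mathbf{x}_{\mathrm o}^N,r)\mid\mathbf{x}_{\mathrm o}^N\},$$ where $\mathcal{S}(\mathbf{x}^N,r)=\{\mathbf{y}^N:\frac1N\sum_n\ln\frac{W(y_n|x_n)}{q_R(y_n)}\le r-\mathrm{e}_{\mathrm{SP}}(r,R)\}$ and $\mathcal{S}(m,r)=\{\mathbf{y}^N:\frac1N\sum_n\ln\frac{W(y_n|f_n(m,\mathbf{y}^{n-1}))}{q_R(y_n)}\le r-\mathrm{e}_{\mathrm{SP}}(r,R)\}$.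
   Context: $\mathcal{X},\mathcal{Y}$ finite; symmetric (Gallager): outputs partitionable into subsets within each of which every row of the transition submatrix is a permutation of every other row and every column of every other column. $U_{\mathcal{X}}$ uniform. $\mathrm{E}_{\mathrm{SP}}(r,U_{\mathcal{X}})=\min_{V:I(U_{\mathcal{X}};V)\le r}D(V\|W|U_{\mathcal{X}})$, $D(V\|W|Q)=\sum_xQ(x)D(V(\cdot|x)\|W(\cdot|x))$ and for $q\in\mathcal{P}(\mathcal{Y})$, $D(V\|q|Q)=\sum_xQ(x)D(V(\cdot|x)\|q)$. $R_\infty$, $R_{\mathrm{cr}}$, $C(W)$: infinite-sphere-packing rate, critical rate, capacity. $\rho_R=-\partial_r\mathrm{E}_{\mathrm{SP}}(r,U_{\mathcal{X}})|_{r=R}$ and $q_R(y)\propto(\sum_xU_{\mathcal{X}}(x)W(y|x)^{1/(1+\rho_R)})^{1+\rho_R}$ (normalized). For $r\le R$ (with the infimum below over a nonempty set), $\mathrm{e}_{\mathrm{SP}}(r,R)=\inf_{V:D(V\|q_R|U_{\mathcal{X}})\le r}D(V\|W|U_{\mathcal{X}})$. A code with ideal feedback has $f_n:\mathcal{M}\times\mathcal{Y}^{n-1}\to\mathcal{X}$ and output law $P_{\mathbf{Y}^N|M}(\mathbf{y}^N|m)=\prod_nW(y_n|f_n(m,\mathbf{y}^{n-1}))$. *)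

From HB Require Import structures.
From mathcomp Require Import all_boot all_order all_algebra.
From mathcomp Require Import all_classical all_reals all_analysis.
From mathcomp Require Import fingroup perm.
Set Implicit Arguments. Unset Strict Implicit. Unset Printing Implicit Defensive.
Import Order.TTheory GRing.Theory Num.Theory.
Local Open Scope classical_set_scope.
Local Open Scope ring_scope.

Section Channels.
Variables (R : realType) (X Y : finType).

Definition is_dist (T : finType) (p : T -> R) :=
  (forall t, 0 <= p t) /\ \sum_(t : T) p t = 1.

Definition is_channel (W : X -> Y -> R) := forall x, is_dist (W x).

Definition unif (x : X) : R := #|X|%:R^-1.

(* Gallager symmetric channel: the outputs can be partitioned into subsets
   such that, inside each subset B, every row of the submatrix (W x y)_{y in B}
   is a permutation of every other row, and every column (W x y)_x (y in B)
   is a permutation of every other column. *)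
Definition symmetric_channel (W : X -> Y -> R) :=
  exists P : {set {set Y}}, finset.partition P [set: Y] /\
    forall B, B \in P ->
      (forall x x', exists s : {perm Y},
          (forall y, y \in B -> s y \in B) /\
          (forall y, y \in B -> W x' y = W x (s y))) /\
      (forall y y', y \in B -> y' \in B -> exists t : {perm X},
          forall x, W x y' = W (t x) y).

Definition KL (p q : Y -> R) : \bar R :=
  (\sum_(y : Y) (if p y == 0%R then 0%E
                 else if q y == 0%R then +oo%E
                 else (p y * ln (p y / q y))%:E))%E.

Definition cdiv (V W : X -> Y -> R) (Q : X -> R) : \bar R :=
  (\sum_(x : X) (Q x)%:E * KL (V x) (W x))%E.

Definition outd (Q : X -> R) (V : X -> Y -> R) (y : Y) : R :=
  \sum_(x : X) Q x * V x y.

Definition minfo (Q : X -> R) (V : X -> Y -> R) : \bar R :=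
  cdiv V (fun _ => outd Q V) Q.

Definition capacity (W : X -> Y -> R) : \bar R :=
  ereal_sup [set minfo Q W | Q in [set Q | is_dist Q]].

Definition ESP (W : X -> Y -> R) (Q : X -> R) (r : R) : \bar R :=
  ereal_inf [set cdiv V W Q |
             V in [set V | is_channel V /\ (minfo Q V <= r%:E)%E]].

Definition Rinf (W : X -> Y -> R) : \bar R :=
  ereal_inf [set r%:E | r in [set r | (ESP W unif r < +oo)%E]].

(* critical rate (Csiszar-Korner): the smallest rate at which the convex curve
   E_SP(., U_X) meets its supporting line of slope -1, i.e. the smallest
   minimizer of r |-> E_SP(r, U_X) + r. *)
Definition Rcr (W : X -> Y -> R) : \bar R :=
  let g := fun r : R => (ESP W unif r + r%:E)%E in
  ereal_inf [set r%:E | r in [set r | g r = ereal_inf (range g)]].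

Definition rhoR (W : X -> Y -> R) (Rt : R) : R :=
  - derive1 (fun r : R => fine (ESP W unif r)) Rt.

Definition qR_unnorm (W : X -> Y -> R) (Rt : R) (y : Y) : R :=
  (\sum_(x : X) unif x * W x y `^ (1 + rhoR W Rt)^-1) `^ (1 + rhoR W Rt).

Definition qR (W : X -> Y -> R) (Rt : R) (y : Y) : R :=
  qR_unnorm W Rt y / \sum_(y' : Y) qR_unnorm W Rt y'.

Definition eSP_set (W : X -> Y -> R) (Rt r : R) : set (X -> Y -> R) :=
  [set V | is_channel V /\ (cdiv V (fun _ => qR W Rt) unif <= r%:E)%E].

Definition eSP (W : X -> Y -> R) (Rt r : R) : \bar R :=
  ereal_inf [set cdiv V W unif | V in eSP_set W Rt r].

Definition powE (a l : R) : \bar R :=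
  if a == 0 then (if l < 0 then +oo%E else if l == 0 then 1%E else 0%E)
  else (a `^ l)%:E.

Definition Mx (W : X -> Y -> R) (Rt : R) (x : X) (l : R) : \bar R :=
  (\sum_(y : Y | W x y != 0%R) (W x y `^ (1 - l))%:E * powE (qR W Rt y) l)%E.

Definition llr (W : X -> Y -> R) (q : Y -> R) (x : X) (y : Y) : \bar R :=
  if W x y == 0 then -oo%E else (ln (W x y / q y))%:E.

Definition avg_llr (W : X -> Y -> R) (q : Y -> R) (N : nat)
    (xs : 'I_N -> X) (ys : N.-tuple Y) : \bar R :=
  ((N%:R^-1)%:E * \sum_(n < N) llr W q (xs n) (tnth ys n))%E.

Definition S_fixed (W : X -> Y -> R) (Rt r : R) (N : nat) (xo : X)
    (ys : N.-tuple Y) : bool :=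
  (avg_llr W (qR W Rt) (fun _ => xo) ys <= r%:E - eSP W Rt r)%E.

Definition prob_fixed (W : X -> Y -> R) (Rt r : R) (N : nat) (xo : X) : R :=
  \sum_(ys : N.-tuple Y | S_fixed W Rt r xo ys) \prod_(n < N) W xo (tnth ys n).

(* codes with ideal feedback: f n m y^{n-1}, with y^{n-1} the first n
   (0-indexed: entries 0..n-1) outputs; P(y^N|m) = prod_n W(y_n|f_n(m,y^{n-1})) *)
Definition S_fb (W : X -> Y -> R) (Rt r : R) (N : nat) (M : finType)
    (f : 'I_N -> M -> seq Y -> X) (m : M) (ys : N.-tuple Y) : bool :=
  (avg_llr W (qR W Rt) (fun n => f n m (take n ys)) ys
     <= r%:E - eSP W Rt r)%E.

Definition prob_fb (W : X -> Y -> R) (Rt r : R) (N : nat) (M : finType)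
    (f : 'I_N -> M -> seq Y -> X) (m : M) : R :=
  \sum_(ys : N.-tuple Y | S_fb W Rt r f m ys)
     \prod_(n < N) W (f n m (take n ys)) (tnth ys n).

End Channels.

From HB Require Import structures.
From mathcomp Require Import all_boot all_order all_algebra.
From mathcomp Require Import all_classical all_reals all_analysis.
From mathcomp Require Import fingroup perm.
Import Order.TTheory GRing.Theory Num.Theory.
Local Open Scope classical_set_scope.
Local Open Scope ring_scope.

(* For a symmetric channel any two rows are related by a permutation of the
   outputs that preserves the blocks of the partition; as q_R is a symmetric
   function of a column, it is constant on each block, so this permutation
   also preserves q_R.  Part (i) is then a reindexing of the sum defining M_x
   (finiteness only needs q_R > 0, which holds since no column vanishes).
   For part (ii), applying at time n the permutation that carries row
   f_n(m, y^{n-1}) to row x_o is a causal, hence injective, map of output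
   sequences; it carries the feedback likelihoods and log-likelihood ratios
   letter by letter to those of x_o^N. *)

Lemma glue_block_perms {T : finType} {P : {set {set T}}}
    {sB : {set T} -> {perm T}} :
  finset.partition P [set: T] ->
  (forall B y, B \in P -> y \in B -> sB B y \in B) ->
  exists s : {perm T}, forall y,
    s y = sB (finset.pblock P y) y /\ s y \in finset.pblock P y.
Proof.
move=> hP sB_stable.
have blockP y : finset.pblock P y \in P.
  by apply: pblock_mem; rewrite (cover_partition hP) inE.
pose g y := sB (finset.pblock P y) y.
have g_block y : g y \in finset.pblock P y.
  by apply: sB_stable; rewrite // mem_pblock (cover_partition hP) inE.
have g_pblock y : finset.pblock P (g y) = finset.pblock P y.
  by apply: same_pblock; [case/and3P: hP | exact: g_block].
have g_inj : injective g.
  move=> y y' e; have e_block : finset.pblock P y = finset.pblock P y'.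
    by rewrite -g_pblock e g_pblock.
  by move: e; rewrite /g e_block => /perm_inj.
by exists (perm g_inj) => y; rewrite permE; split; last exact: g_block.
Qed.

Lemma psumr_gt0 (R : numDomainType) (I : finType) (F : I -> R) (i : I) :
  (forall j, 0 <= F j) -> 0 < F i -> 0 < \sum_j F j.
Proof.
move=> F_ge0 Fi_gt0; rewrite lt_def sumr_ge0 // andbT psumr_neq0 //.
by apply/hasP; exists i; rewrite ?mem_index_enum.
Qed.

Lemma causal_perm_tuple_inj {T : finType} {N : nat}
    (g : 'I_N -> seq T -> {perm T}) :
  injective (fun ys : N.-tuple T => [tuple g n (take n ys) (tnth ys n) | n < N]).
Proof.
move=> ys ys' e.
have take_eq k : (k <= N)%N -> take k ys = take k ys'.
  elim: k => [|k IH] ltkN; first by rewrite !take0.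
  have {}IH := IH (ltnW ltkN); have y0 := tnth ys (Ordinal ltkN).
  rewrite !(take_nth y0) ?size_tuple // IH; congr rcons.
  have := congr1 (fun t => tnth t (Ordinal ltkN)) e.
  by rewrite !tnth_mktuple IH => /perm_inj; rewrite !(tnth_nth y0).
by apply: val_inj; have := take_eq N (leqnn N); rewrite !take_oversize ?size_tuple.
Qed.

Section SymmetricChannel.
Context {R : realType} {X Y : finType} {W : X -> Y -> R} (Rt : R).

Lemma qR_unnorm_col_perm {t : {perm X}} {y y'} :
  (forall x, W x y' = W (t x) y) -> qR_unnorm W Rt y' = qR_unnorm W Rt y.
Proof.
move=> ht; rewrite /qR_unnorm [in RHS](reindex_inj (@perm_inj _ t)).
by congr (_ `^ _); apply: eq_bigr => x _; rewrite /unif ht.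
Qed.

Lemma qR_col_perm {t : {perm X}} {y y'} :
  (forall x, W x y' = W (t x) y) -> qR W Rt y' = qR W Rt y.
Proof. by move=> ht; rewrite /qR (qR_unnorm_col_perm ht). Qed.

Lemma qR_gt0 : (0 < #|X|)%N -> is_channel W ->
  (forall y, exists x, W x y != 0) -> forall y, 0 < qR W Rt y.
Proof.
move=> X_gt0 hW hcol.
have unnorm_gt0 y : 0 < qR_unnorm W Rt y.
  have [x Wxy_neq0] := hcol y.
  have unif_gt0 : 0 < unif R x by rewrite /unif invr_gt0 ltr0n.
  apply/powR_gt0/(@psumr_gt0 _ _ _ x) => [z|].
    by rewrite mulr_ge0 ?powR_ge0 // ltW.
  by rewrite mulr_gt0 // powR_gt0 // lt_def Wxy_neq0 (proj1 (hW x)).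
by move=> y; rewrite divr_gt0 // (@psumr_gt0 _ _ _ y) // => z; rewrite ltW.
Qed.

Lemma Mx_fin_num : (forall y, 0 < qR W Rt y) ->
  forall x l, Mx W Rt x l \is a fin_num.
Proof. by move=> q_gt0 x l; apply/sum_fin_numP => y _ _; rewrite /powE gt_eqF. Qed.

Hypothesis hsym : symmetric_channel W.

Lemma symmetric_row_perm x x' : exists s : {perm Y}, forall y,
  W x y = W x' (s y) /\ qR W Rt (s y) = qR W Rt y.
Proof.
have [P [hP hB]] := hsym.
have /choice [sB hsB] : forall B, exists s : {perm Y}, B \in P ->
    (forall y, y \in B -> s y \in B) /\ (forall y, y \in B -> W x y = W x' (s y)).
  move=> B; have [BP|] := boolP (B \in P); last by exists 1%g.
  by have [s hs] := (hB B BP).1 x' x; exists s.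
have [s hs] := glue_block_perms hP (fun B y BP => (hsB B BP).1 y).
have y_block y : y \in finset.pblock P y.
  by rewrite mem_pblock (cover_partition hP) inE.
have blockP y : finset.pblock P y \in P by rewrite pblock_mem ?(cover_partition hP).
exists s => y; have [sy_eq sy_block] := hs y; split.
  by rewrite sy_eq; apply: (hsB _ (blockP y)).2.
have [t ht] := (hB _ (blockP y)).2 _ _ (y_block y) sy_block.
exact: qR_col_perm ht.
Qed.

Lemma llr_row_perm (s : {perm Y}) x x' y :
  W x y = W x' (s y) -> qR W Rt (s y) = qR W Rt y ->
  llr W (qR W Rt) x y = llr W (qR W Rt) x' (s y).
Proof. by rewrite /llr => -> ->. Qed.

Lemma avg_llr_eq {q : Y -> R} {N} {xs xs' : 'I_N -> X} {ys ys' : N.-tuple Y} :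
  (forall n, llr W q (xs n) (tnth ys n) = llr W q (xs' n) (tnth ys' n)) ->
  avg_llr W q xs ys = avg_llr W q xs' ys'.
Proof. by move=> h; rewrite /avg_llr (eq_bigr _ (fun n _ => h n)). Qed.

Lemma Mx_row_invariant x x' l : Mx W Rt x l = Mx W Rt x' l.
Proof.
have [s hs] := symmetric_row_perm x x'.
rewrite /Mx [RHS](reindex_inj (@perm_inj _ s)).
by apply: eq_big => [y | y _]; have [-> q_sy] := hs y; rewrite ?q_sy.
Qed.

Lemma prob_fb_eq_fixed xo N (M : finType) (f : 'I_N -> M -> seq Y -> X) m r :
  prob_fb W Rt r f m = prob_fixed W Rt r N xo.
Proof.
have /choice [s hs] := fun x => symmetric_row_perm x xo.
pose Phi (ys : N.-tuple Y) := [tuple s (f n m (take n ys)) (tnth ys n) | n < N].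
have Phi_inj : injective Phi := causal_perm_tuple_inj (fun n ys => s (f n m ys)).
rewrite /prob_fixed (reindex_inj Phi_inj) /prob_fb.
apply: eq_big => [ys | ys _].
  have llr_eq n : llr W (qR W Rt) (f n m (take n ys)) (tnth ys n) =
                  llr W (qR W Rt) xo (tnth (Phi ys) n).
    rewrite tnth_mktuple; have [] := hs (f n m (take n ys)) (tnth ys n).
    exact: llr_row_perm.
  by rewrite /S_fb /S_fixed (avg_llr_eq llr_eq).
apply: eq_bigr => n _; rewrite tnth_mktuple.
by have [] := hs (f n m (take n ys)) (tnth ys n).
Qed.

End SymmetricChannel.

Theorem lemma3 (R : realType) (X Y : finType) (W : X -> Y -> R)
  (hX : (0 < #|X|)%N)
  (hW : is_channel W) (hsym : symmetric_channel W)
  (hcr : (Rcr W < capacity W)%E)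
  (hcol : forall y : Y, exists x : X, W x y != 0)
  (Rt : R) (hRinf : (Rinf W < Rt%:E)%E) (hRC : (Rt%:E < capacity W)%E) :
  (forall l : R,
     (forall x : X, Mx W Rt x l \is a fin_num) /\
     (forall x x' : X, Mx W Rt x l = Mx W Rt x' l)) /\
  (forall (xo : X) (N : nat) (M : finType) (f : 'I_N -> M -> seq Y -> X),
     expR (N%:R * Rt) <= #|M|%:R ->
     forall (m : M) (r : R), 0 <= r -> r <= Rt ->
       eSP_set W Rt r !=set0 ->
       prob_fb W Rt r f m = prob_fixed W Rt r N xo).
Proof.
have q_gt0 := qR_gt0 Rt hX hW hcol.
split=> [l | xo N M f _ m r _ _ _]; last exact: prob_fb_eq_fixed.
split=> [x | x x']; first exact: Mx_fin_num q_gt0 x l.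
exact: Mx_row_invariant.
Qed.
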